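(* Let $m\ge1$, $0<\lambda_1\le\dots\le\lambda_m$, $0<\Lambda_0\le\Lambda_1$, and let $a,b$ be positive definite (symmetric) $m\times m$ matrices with $\Lambda_0I\le a,b\le\Lambda_1I$. Set $\theta=\Lambda_0^{-1}m\|a-b\|_s$. Then for all $t>0$, $$\Big|\frac{\det\widetilde b(t)}{\det\widetilde a(t)}-1\Big|\le\theta e^\theta.$$
   Context: $a(t)$ has entries $a_{ij}(1-e^{-(\lambda_i+\lambda_j)t})/(\lambda_i+\lambda_j)$; $g(t)$ is diagonal with $g_{ii}(t)=(1-e^{-2\lambda_it})/(2\lambda_i)$, $G(t)=g(t)^{-1}$; $\widetilde a(t)=G(t)^{1/2}a(t)G(t)^{1/2}$, and $\widetilde b(t)$ analogously from $b$. $\|c\|_s=\max\{\sup_i\sum_j|c_{ij}|,\sup_j\sum_i|c_{ij}|\}$. *)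

From HB Require Import structures.
From mathcomp Require Import all_boot all_order all_algebra.
From mathcomp Require Import all_classical all_reals all_analysis.
Set Implicit Arguments. Unset Strict Implicit. Unset Printing Implicit Defensive.
Import Order.TTheory GRing.Theory Num.Theory.
Local Open Scope ring_scope.

Definition mx_t (R : realType) (m : nat) (lam : 'I_m -> R) (a : 'M[R]_m) (t : R)
  : 'M[R]_m :=
  \matrix_(i, j) (a i j * (1 - expR (- ((lam i + lam j) * t))) / (lam i + lam j)).

Definition g_t (R : realType) (m : nat) (lam : 'I_m -> R) (t : R) : 'M[R]_m :=
  diag_mx (\row_i ((1 - expR (- (2 * lam i * t))) / (2 * lam i))).

Definition G_t (R : realType) (m : nat) (lam : 'I_m -> R) (t : R) : 'M[R]_m :=
  invmx (g_t lam t).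

(* G(t)^{1/2}: G(t) is diagonal with positive entries; entrywise square root
   of the diagonal. *)
Definition G_t_sqrt (R : realType) (m : nat) (lam : 'I_m -> R) (t : R) : 'M[R]_m :=
  diag_mx (\row_i Num.sqrt (G_t lam t i i)).

Definition mx_tilde (R : realType) (m : nat) (lam : 'I_m -> R) (c : 'M[R]_m) (t : R)
  : 'M[R]_m :=
  G_t_sqrt lam t *m mx_t lam c t *m G_t_sqrt lam t.

Definition norm_s (R : realType) (m : nat) (c : 'M[R]_m) : R :=
  Num.max (\big[Num.max/0]_(i < m) \sum_(j < m) `|c i j|)
          (\big[Num.max/0]_(j < m) \sum_(i < m) `|c i j|).

Definition loewner_le (R : realType) (m : nat) (A B : 'M[R]_m) : Prop :=
  forall x : 'rV[R]_m, 0 <= (x *m (B - A) *m x^T) 0 0.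

From HB Require Import structures.
From mathcomp Require Import all_boot all_order all_algebra.
From mathcomp Require Import all_classical all_reals all_analysis.
From mathcomp Require Import complex.
From mathcomp Require Import ring lra.
Import Order.TTheory GRing.Theory Num.Theory.
Set Implicit Arguments. Unset Strict Implicit. Unset Printing Implicit Defensive.
Local Open Scope ring_scope.

(* Write A := a~(t) and B := b~(t).  Entrywise, a(t) is the Hadamard product of
   a with the kernel k_ij(t) = int_0^t exp (-(l_i + l_j) s) ds, which is
   positive semidefinite since its t-derivative is a Gram matrix, and
   G(t)^(1/2) k(t) G(t)^(1/2) has unit diagonal.  Hence L0 <= A, B persists,
   and |A_ij - B_ij| <= |a_ij - b_ij| by Cauchy-Schwarz for k.  The eigenvalues
   of A^-1 B are positive reals (ratios of positive quadratic forms), so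
   x <= exp (x - 1) gives det (A^-1 B) <= exp (tr (A^-1 (B - A))), and
   |(A^-1)_ij| <= 1/L0 bounds this trace by theta.  Exchanging a and b bounds
   the inverse ratio, and r, 1/r <= e^theta imply |r - 1| <= theta e^theta. *)

Lemma bilform_mxE (R : pzRingType) k (u v : 'rV[R]_k) (M : 'M[R]_k) :
  (u *m M *m v^T) 0 0 = \sum_i \sum_j u 0 i * M i j * v 0 j.
Proof.
rewrite mxE; under eq_bigr do rewrite mxE mulr_suml.
rewrite exchange_big /=; apply: eq_bigr => i _; apply: eq_bigr => j _.
by rewrite !mxE.
Qed.

Section QuadraticForm.
Variables (R : realType) (k : nat).
Implicit Types (c : R) (M N : 'M[R]_k) (y : 'rV[R]_k).

Definition qform M y : R := (y *m M *m y^T) 0 0.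

Lemma qformE M y : qform M y = \sum_i \sum_j y 0 i * M i j * y 0 j.
Proof. exact: bilform_mxE. Qed.

Lemma qformB M N y : qform (M - N) y = qform M y - qform N y.
Proof. by rewrite /qform mulmxBr mulmxBl !mxE. Qed.

Lemma qform_scalar c y : qform c%:M y = c * \sum_i y 0 i ^+ 2.
Proof.
rewrite /qform mul_mx_scalar -scalemxAl mxE; congr (_ * _).
by rewrite mxE; apply: eq_bigr => i _; rewrite !mxE expr2.
Qed.

Lemma loewner_scalar_le c M :
  loewner_le c%:M M -> forall y, c * \sum_i y 0 i ^+ 2 <= qform M y.
Proof. by move=> cM y; rewrite -subr_ge0 -qform_scalar -qformB; exact: cM. Qed.

Lemma sum_sqr_gt0 y : y != 0 -> 0 < \sum_i y 0 i ^+ 2.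
Proof.
move=> yn0; rewrite lt_def sumr_ge0 ?andbT => [|i _]; last exact: sqr_ge0.
apply: contra yn0 => /eqP /(psumr_eq0P (fun i _ => sqr_ge0 (y 0 i))) y0.
by apply/eqP/rowP => i; rewrite mxE; apply/eqP; rewrite -sqrf_eq0 y0.
Qed.

Lemma qform_ge0 c M y : 0 <= c -> loewner_le c%:M M -> 0 <= qform M y.
Proof.
move=> c0 cM; apply: le_trans (loewner_scalar_le cM y).
by rewrite mulr_ge0 // sumr_ge0 // => i _; exact: sqr_ge0.
Qed.

Lemma qform_gt0 c M y : 0 < c -> loewner_le c%:M M -> y != 0 -> 0 < qform M y.
Proof.
move=> c0 cM yn0; apply: lt_le_trans (loewner_scalar_le cM y).
by rewrite mulr_gt0 // sum_sqr_gt0.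
Qed.

Lemma unitmx_loewner c M : 0 < c -> loewner_le c%:M M -> M \in unitmx.
Proof.
move=> c0 cM; rewrite unitmxE unitfE; apply/negP => /det0P [v vn0 vM].
by have := qform_gt0 c0 cM vn0; rewrite /qform vM mul0mx mxE ltxx.
Qed.

Lemma invmx_entry_le c M i j :
  0 < c -> loewner_le c%:M M -> `|invmx M i j| <= c^-1.
Proof.
move=> c0 cM; pose y := row i (invmx M).
(* [y *m M] is the i-th unit row, so [c * |y|^2 <= qform M y = y_i]. *)
have sq_le l : c * y 0 l ^+ 2 <= y 0 i.
  have <- : qform M y = y 0 i.
    by rewrite /qform -row_mul mulVmx ?(unitmx_loewner c0 cM) // row1 -rowE !mxE.
  apply: le_trans (loewner_scalar_le cM y); rewrite ler_pM2l //.
  by rewrite (bigD1 l) //= lerDl sumr_ge0 // => ? _; exact: sqr_ge0.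
have cV_gt0 : 0 < c^-1 by rewrite invr_gt0.
have yi_le : y 0 i <= c^-1.
  have [yi_le0|yi_gt0] := lerP (y 0 i) 0; first exact: le_trans yi_le0 (ltW cV_gt0).
  by rewrite -(ler_pM2l c0) mulfV ?gt_eqF // -(ler_pM2r yi_gt0) mul1r -mulrA -expr2.
have yj_sq := le_trans (sq_le j) yi_le.
have -> : invmx M i j = y 0 j by rewrite mxE.
have ccV : c * c^-1 = 1 by rewrite mulfV ?gt_eqF.
move: yj_sq ccV cV_gt0; set u := c^-1 => yj_sq ccV u_gt0.
rewrite ler_norml; apply/andP; split; nra.
Qed.

Lemma mxtrace_invmx_mul_le c M N : 0 < c -> loewner_le c%:M M ->
  `|\tr (invmx M *m N)| <= c^-1 * \sum_i \sum_j `|N i j|.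
Proof.
move=> c0 cM; rewrite /mxtrace; apply: le_trans (ler_norm_sum _ _ _) _.
rewrite [\sum_i \sum_j _]exchange_big mulr_sumr; apply: ler_sum => i _.
rewrite mxE; apply: le_trans (ler_norm_sum _ _ _) _; rewrite mulr_sumr.
by apply: ler_sum => j _; rewrite normrM ler_wpM2r // invmx_entry_le.
Qed.

End QuadraticForm.

Section RealSpectrum.
Variable R : realType.
Local Notation toC := (real_complex R).

Lemma sesquiform_realsym k (M : 'M[R]_k) (w : 'rV[complex R]_k) : M^T = M ->
  (w *m map_mx toC M *m (map_mx conjc w)^T) 0 0
  = toC (qform M (map_mx (@complex.Re R) w) + qform M (map_mx (@complex.Im R) w)).
Proof.
move=> MT; set X := map_mx _ w; set Y := map_mx _ w.
have Msym i j : M j i = M i j by rewrite -[in RHS]MT mxE.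
have entryE i j : w 0 i * toC (M i j) * conjc (w 0 j) =
    Complex (X 0 i * M i j * X 0 j + Y 0 i * M i j * Y 0 j)
            (M i j * (Y 0 i * X 0 j) - M j i * (Y 0 j * X 0 i)).
  rewrite Msym !mxE; case: (w 0 i) => a b; case: (w 0 j) => a' b' /=.
  by congr Complex; ring.
rewrite bilform_mxE; under eq_bigr do under eq_bigr do rewrite !mxE entryE.
apply/eqP; rewrite eq_complex /= !raddf_sum /=.
under eq_bigr do rewrite raddf_sum /=.
under [in X in _ && X]eq_bigr do rewrite raddf_sum /= sumrB.
rewrite !qformE -big_split sumrB [X in _ - X]exchange_big subrr eqxx andbT /=.
by apply/eqP/eq_bigr => i _; rewrite -big_split.
Qed.

Lemma eigenvalue_invmx_mul_gt0 k c (A B : 'M[R]_k) mu : 0 < c ->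
  A^T = A -> B^T = B -> loewner_le c%:M A -> loewner_le c%:M B ->
  eigenvalue (map_mx toC (invmx A *m B)) mu -> exists2 r, 0 < r & mu = toC r.
Proof.
move=> c0 AT BT cA cB /eigenvalueP [v vAB vn0].
pose w := v *m map_mx toC (invmx A).
have vE : v = w *m map_mx toC A.
  by rewrite -mulmxA -map_mxM mulVmx ?(unitmx_loewner c0 cA) // map_mx1 mulmx1.
have wB : w *m map_mx toC B = mu *: (w *m map_mx toC A).
  by rewrite -vE -vAB map_mxM mulmxA.
have wn0 : w != 0 by apply: contraNneq vn0 => w0; rewrite vE w0 mul0mx.
clearbody w.
set X := map_mx (@complex.Re R) w; set Y := map_mx (@complex.Im R) w.
have XYn0 : (X != 0) || (Y != 0).
  apply: contraNT wn0; rewrite negb_or => /andP[/negPn/eqP X0 /negPn/eqP Y0].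
  apply/eqP/rowP => j; move/rowP/(_ j): X0; move/rowP/(_ j): Y0; rewrite !mxE.
  by case: (w 0 j) => a b /= -> ->.
have form_gt0 N : loewner_le c%:M N -> 0 < qform N X + qform N Y.
  move=> cN; have ge0 Z := qform_ge0 Z (ltW c0) cN.
  by case/orP: XYn0 => /(qform_gt0 c0 cN) ?; [rewrite ltr_pwDl | rewrite ltr_pwDr].
(* Testing [w B = mu w A] against [conj w] exhibits [mu] as a ratio of two
   positive quadratic forms. *)
have := congr1 (fun Z : 'rV_k => (Z *m (map_mx conjc w)^T) 0 0) wB.
rewrite /= -scalemxAl [X in _ = X]mxE !sesquiform_realsym // => muE.
exists ((qform B X + qform B Y) / (qform A X + qform A Y)).
  by rewrite divr_gt0 ?form_gt0.
by rewrite fmorph_div /= muE mulfK // fmorph_eq0 gt_eqF // form_gt0.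
Qed.

Lemma det_mxtrace_pos_spectrum k (M : 'M[R]_k) : (0 < k)%N ->
  (forall mu, eigenvalue (map_mx toC M) mu -> exists2 r, 0 < r & mu = toC r) ->
  exists2 d : 'I_k -> R, (forall i, 0 < d i) &
    \det M = \prod_i d i /\ \tr M = \sum_i d i.
Proof.
move=> k_gt0 M_spec.
(* Triangularize over [complex R]: the diagonal of [T] lists the eigenvalues. *)
have [P /unitarymx_unit Pu T_trig] := Schur (map_mx toC M) k_gt0.
move: T_trig; rewrite /similar_to conjumx //; set T := P *m _ *m _ => T_trig.
have eigT i : eigenvalue (map_mx toC M) (T i i).
  apply: (eigenvalue_conjmx (stablemx_unit _ Pu)); first by rewrite row_free_unit.
  rewrite conjumx //; change (eigenvalue T (T i i)).
  rewrite eigenvalue_root_char char_poly_trig // rootE horner_prod.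
  by rewrite (bigD1 i) //= hornerXsubC subrr mul0r.
have detT : \det T = toC (\det M).
  by rewrite /T !det_mulmx det_inv det_map_mx mulrAC mulfV ?mul1r.
have trT : \tr T = toC (\tr M).
  rewrite /T mxtrace_mulC mulmxA mulVmx // mul1mx /mxtrace rmorph_sum.
  by apply: eq_bigr => i _; rewrite mxE.
have TiiE i : T i i = toC (complex.Re (T i i)).
  by have [r _ ->] := M_spec _ (eigT i).
exists (fun i => complex.Re (T i i)) => [i|].
  by have [r r_gt0 ->] := M_spec _ (eigT i).
split; apply: (@complexI R).
  by rewrite -detT det_trig // rmorph_prod; apply: eq_bigr => i _; exact: TiiE.
by rewrite -trT rmorph_sum; apply: eq_bigr => i _; exact: TiiE.
Qed.

End RealSpectrum.

Lemma prod_le_expR_sum (R : realType) k (d : 'I_k -> R) :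
  (forall i, 0 <= d i) -> \prod_i d i <= expR (\sum_i d i - k%:R).
Proof.
move=> d_ge0; rewrite -[k in k%:R]card_ord -sumr_const -sumrB expR_sum.
apply: ler_prod => i _; rewrite d_ge0 /=.
by have := expR_ge1Dx (d i - 1); rewrite addrC subrK.
Qed.

Lemma det_ratio_le (R : realType) k c (A B : 'M[R]_k) : (0 < k)%N -> 0 < c ->
  A^T = A -> B^T = B -> loewner_le c%:M A -> loewner_le c%:M B ->
  0 < \det B / \det A /\
  \det B / \det A <= expR (c^-1 * \sum_i \sum_j `|B i j - A i j|).
Proof.
move=> k_gt0 c_gt0 AT BT cA cB; have Au := unitmx_loewner c_gt0 cA.
have [d d_gt0 [detE trE]] := det_mxtrace_pos_spectrum k_gt0
  (fun mu => eigenvalue_invmx_mul_gt0 c_gt0 AT BT cA cB).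
have -> : \det B / \det A = \det (invmx A *m B) by rewrite det_mulmx det_inv mulrC.
rewrite detE; split; first exact: prodr_gt0.
apply: le_trans (prod_le_expR_sum (fun i => ltW (d_gt0 i))) _.
rewrite ler_expR -trE -[X in _ - X]mxtrace1 -(mulVmx Au) -raddfB -mulmxBr /=.
apply: le_trans (ler_norm _) (le_trans (mxtrace_invmx_mul_le _ c_gt0 cA) _).
apply: ler_wpM2l; first by rewrite invr_ge0 ltW.
by apply: ler_sum => i _; apply: ler_sum => j _; rewrite !mxE.
Qed.

Lemma dist1_le_mul_expR (R : realType) (r x : R) : 0 < r -> 0 <= x ->
  r <= expR x -> r^-1 <= expR x -> `|r - 1| <= x * expR x.
Proof.
move=> r_gt0 x_ge0 r_le rV_le.
have E1 : 1 <= expR x by rewrite -expR0 ler_expR.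
have EN : expR (- x) * expR x = 1 by rewrite -expRD addNr expR0.
have ENx : 1 - x <= expR (- x) := expR_ge1Dx (- x).
have ENr : expR (- x) <= r.
  by rewrite expRN -[r]invrK lef_pV2 ?posrE ?invr_gt0 ?expR_gt0.
rewrite ler_norml; apply/andP; split; nra.
Qed.

Section ExpIntegral.
Variable R : realType.

(* [expint u t] is the integral of [s |-> expR (- (u * s))] over [0, t], and
   [mx_t lam c t] is the entrywise product of [c] with [expint_mx lam t]. *)
Definition expint (u t : R) : R := (1 - expR (- (u * t))) / u.

Lemma expint0 u : expint u 0 = 0.
Proof. by rewrite /expint mulr0 oppr0 expR0 subrr mul0r. Qed.

Lemma expint_gt0 u t : 0 < u -> 0 < t -> 0 < expint u t.
Proof.
by move=> u_gt0 t_gt0; rewrite divr_gt0 // subr_gt0 expR_lt1 oppr_lt0 mulr_gt0.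
Qed.

Lemma is_derive_expint (u x : R) :
  u != 0 -> is_derive x (1 : R) (expint u) (expR (- (u * x))).
Proof.
move=> u_neq0; rewrite /expint; apply: is_derive_eq.
rewrite !(scaler0, add0r, mul1r) /GRing.scale /=.
by field.
Qed.

Definition expint_mx k (l : 'I_k -> R) t : 'M[R]_k :=
  \matrix_(i, j) expint (l i + l j) t.

Lemma expint_mx_diag_gt0 k (l : 'I_k -> R) t i :
  (forall i, 0 < l i) -> 0 < t -> 0 < expint_mx l t i i.
Proof. by move=> l_gt0 t_gt0; rewrite mxE expint_gt0 ?addr_gt0. Qed.

Lemma qform_hadamard_expint_ge0 k (l : 'I_k -> R) (W : 'M[R]_k) t y :
  (forall i, 0 < l i) -> 0 < t -> (forall z, 0 <= qform W z) ->
  0 <= qform (map2_mx *%R W (expint_mx l t)) y.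
Proof.
move=> l_gt0 t_gt0 W_psd.
(* The form vanishes at [0] and its derivative in [t] is the form of [W] at
   [(y_i * expR (- (l_i * t)))_i]. *)
pose w i j := y 0 i * W i j * y 0 j.
pose f := \sum_(i < k) \sum_(j < k) w i j \*: expint (l i + l j).
have fE s : f s = \sum_i \sum_j w i j * expint (l i + l j) s.
  by rewrite /f fct_sumE; under eq_bigr do rewrite fct_sumE.
pose df s := qform W (\row_i (y 0 i * expR (- (l i * s)))).
have f_derive (s : R) : is_derive s (1 : R) f (df s).
  have -> : df s = \sum_i \sum_j w i j *: expR (- ((l i + l j) * s)).
    rewrite /df qformE; apply: eq_bigr => i _; apply: eq_bigr => j _.
    by rewrite !mxE mulrDl opprD expRD /w /GRing.scale /=; ring.
  apply: is_derive_sum => i; apply: is_derive_sum => j.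
  by apply: is_deriveZ; apply: is_derive_expint; rewrite gt_eqF // addr_gt0.
have [|s _ f_mvt] := MVT t_gt0 (fun s _ => f_derive s).
  by apply: derivable_within_continuous => s _; case: (f_derive s).
have : 0 <= f t - f 0 by rewrite f_mvt mulr_ge0 ?W_psd // subr0 ltW.
rewrite !fE [X in _ - X]big1 ?subr0 => [|i _]; last first.
  by rewrite big1 // => j _; rewrite expint0 mulr0.
by rewrite qformE; congr (0 <= _); apply: eq_bigr => i _; apply: eq_bigr => j _;
  rewrite !mxE /w; ring.
Qed.

Lemma expint_sqr_le p q t : 0 < p -> 0 < q -> 0 < t ->
  expint (p + q) t ^+ 2 <= expint (p + p) t * expint (q + q) t.
Proof.
move=> p_gt0 q_gt0 t_gt0.
(* Test the 2 x 2 kernel of [(p, q)] at [(expint (p + q) t, - expint (p + p) t)]. *)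
pose l (i : 'I_2) := if i == ord0 then p else q.
have l_gt0 i : 0 < l i by rewrite /l; case: ifP.
have ones_psd z : 0 <= qform (const_mx 1 : 'M[R]_2) z.
  rewrite qformE (_ : \sum_i _ = (\sum_i z 0 i) ^+ 2) ?sqr_ge0 //.
  rewrite expr2 mulr_suml; apply: eq_bigr => i _; rewrite mulr_sumr.
  by apply: eq_bigr => j _; rewrite mxE mulr1.
pose y : 'rV[R]_2 := \row_i (if i == ord0 then expint (p + q) t else - expint (p + p) t).
have := qform_hadamard_expint_ge0 y l_gt0 t_gt0 ones_psd.
rewrite qformE !big_ord_recl !big_ord0 !mxE /= /l /= (addrC q p).
set a := expint (p + q) t; set P := expint (p + p) t; set Q := expint (q + q) t.
have P_gt0 : 0 < P by rewrite expint_gt0 ?addr_gt0.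
move=> H; rewrite -subr_ge0 -(pmulr_rge0 _ P_gt0).
by move: H; congr (0 <= _); ring.
Qed.

End ExpIntegral.

Lemma invmx_diag (F : fieldType) k (d : 'rV[F]_k) : (forall i, d 0 i != 0) ->
  invmx (diag_mx d) = diag_mx (\row_i (d 0 i)^-1).
Proof.
move=> d_neq0; have dV : diag_mx d *m diag_mx (\row_i (d 0 i)^-1) = 1%:M.
  apply/matrixP => i j; rewrite mul_diag_mx !mxE.
  by case: (eqVneq i j) => [->|_]; rewrite ?mulr1n ?mulr0n ?mulr0 // mulfV.
by rewrite -[RHS]mul1mx -(mulVmx (proj1 (mulmx1_unit dV))) -mulmxA dV mulmx1.
Qed.

Section Tilde.
Variables (R : realType) (m : nat) (lam : 'I_m -> R) (t : R).
Hypotheses (lam_gt0 : forall i, 0 < lam i) (t_gt0 : 0 < t).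

Let K := expint_mx lam t.
Let s : 'rV[R]_m := \row_i Num.sqrt (K i i)^-1.
Let rho i j := s 0 i * K i j * s 0 j.

Let Kii_gt0 i : 0 < K i i := expint_mx_diag_gt0 i lam_gt0 t_gt0.

Lemma G_t_sqrtE : G_t_sqrt lam t = diag_mx s.
Proof.
have gE : g_t lam t = diag_mx (\row_i K i i).
  congr diag_mx; apply/rowP => i; rewrite !mxE /expint.
  by rewrite (_ : 2 * lam i = lam i + lam i) //; ring.
rewrite /G_t_sqrt /G_t gE invmx_diag => [|i]; last by rewrite mxE gt_eqF ?Kii_gt0.
by congr diag_mx; apply/rowP => i; rewrite !mxE eqxx mulr1n.
Qed.

Lemma mx_tildeE c : mx_tilde lam c t = diag_mx s *m map2_mx *%R c K *m diag_mx s.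
Proof.
rewrite /mx_tilde G_t_sqrtE; congr (_ *m _ *m _); apply/matrixP => i j.
by rewrite !mxE /expint mulrA.
Qed.

Lemma mx_tilde_entry c i j : mx_tilde lam c t i j = c i j * rho i j.
Proof. by rewrite mx_tildeE mul_diag_mx mul_mx_diag !mxE /rho !mxE; ring. Qed.

Lemma rho_diag i : rho i i = 1.
Proof.
rewrite /rho mulrAC -expr2 mxE sqr_sqrtr ?invr_ge0 ?ltW ?Kii_gt0 //.
by rewrite mulVf ?gt_eqF ?Kii_gt0.
Qed.

Lemma rho_sym i j : rho i j = rho j i.
Proof. by rewrite /rho /K !mxE (addrC (lam j) (lam i)); ring. Qed.

Lemma norm_rho_le1 i j : `|rho i j| <= 1.
Proof.
have sqrtV_sqr l : s 0 l ^+ 2 = (K l l)^-1.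
  by rewrite mxE sqr_sqrtr // invr_ge0 ltW ?Kii_gt0.
rewrite -(ler_pXn2r (erefl (0 < 2)%N)) ?nnegrE ?normr_ge0 // expr1n real_normK ?num_real //.
rewrite /rho mulrAC !exprMn !sqrtV_sqr mulrC -invfM ler_pdivrMr ?mulr_gt0 ?Kii_gt0 //.
by rewrite mul1r !mxE expint_sqr_le.
Qed.

Lemma mx_tildeB c d : mx_tilde lam (c - d) t = mx_tilde lam c t - mx_tilde lam d t.
Proof.
rewrite !mx_tildeE -mulmxBl -mulmxBr; congr (_ *m _ *m _).
by apply/matrixP => i j; rewrite !mxE mulrBl.
Qed.

Lemma mx_tilde_scalar x : mx_tilde lam x%:M t = x%:M.
Proof.
apply/matrixP => i j; rewrite mx_tilde_entry !mxE.
by case: (eqVneq i j) => [->|_]; rewrite ?rho_diag ?mulr1 ?mulr0n ?mul0r.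
Qed.

Lemma mx_tilde_sym c : c^T = c -> (mx_tilde lam c t)^T = mx_tilde lam c t.
Proof.
move=> cT; apply/matrixP => i j.
by rewrite mxE !mx_tilde_entry rho_sym -[in RHS]cT mxE.
Qed.

Lemma loewner_mx_tilde x c : loewner_le x%:M c -> loewner_le x%:M (mx_tilde lam c t).
Proof.
move=> xc y; rewrite -(mx_tilde_scalar x) -mx_tildeB.
have -> : (y *m mx_tilde lam (c - x%:M) t *m y^T) 0 0
    = qform (map2_mx *%R (c - x%:M) K) (y *m diag_mx s).
  by rewrite mx_tildeE /qform trmx_mul tr_diag_mx !mulmxA.
exact: qform_hadamard_expint_ge0.
Qed.

Lemma norm_mx_tilde_sub_le c d i j :
  `|mx_tilde lam d t i j - mx_tilde lam c t i j| <= `|c i j - d i j|.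
Proof.
by rewrite !mx_tilde_entry -mulrBl normrM distrC ler_piMr ?norm_rho_le1.
Qed.

End Tilde.

Lemma sum_norm_le_norm_s (R : realType) m (c : 'M[R]_m) :
  \sum_i \sum_j `|c i j| <= m%:R * norm_s c.
Proof.
rewrite mulr_natl -[X in _ *+ X]card_ord -sumr_const; apply: ler_sum => i _.
apply: le_trans (le_bigmax 0 (fun i => \sum_j `|c i j|) i) _.
by rewrite /norm_s le_max lexx.
Qed.

Theorem lemma4p6 (R : realType) (m : nat) (lam : 'I_m -> R)
  (L0 L1 : R) (a b : 'M[R]_m) :
  (0 < m)%N ->
  (forall i, 0 < lam i) ->
  (forall i j : 'I_m, (i <= j)%N -> lam i <= lam j) ->
  0 < L0 -> L0 <= L1 ->
  a^T = a -> b^T = b ->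
  loewner_le (L0%:M) a -> loewner_le a (L1%:M) ->
  loewner_le (L0%:M) b -> loewner_le b (L1%:M) ->
  let theta := L0^-1 * m%:R * norm_s (a - b) in
  forall t : R, 0 < t ->
    `| \det (mx_tilde lam b t) / \det (mx_tilde lam a t) - 1 | <= theta * expR theta.
Proof.
move=> m_gt0 lam_gt0 _ L0_gt0 _ aT bT L0a _ L0b _ theta t t_gt0.
set A := mx_tilde lam a t; set B := mx_tilde lam b t.
have AT : A^T = A := mx_tilde_sym lam_gt0 t_gt0 aT.
have BT : B^T = B := mx_tilde_sym lam_gt0 t_gt0 bT.
have L0A : loewner_le L0%:M A := loewner_mx_tilde lam_gt0 t_gt0 L0a.
have L0B : loewner_le L0%:M B := loewner_mx_tilde lam_gt0 t_gt0 L0b.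
have dist_le (C D : 'M[R]_m) : (forall i j, `|C i j - D i j| <= `|a i j - b i j|) ->
    L0^-1 * \sum_i \sum_j `|C i j - D i j| <= theta.
  move=> CD; rewrite /theta -mulrA; apply: ler_wpM2l; first by rewrite invr_ge0 ltW.
  apply: le_trans (sum_norm_le_norm_s (a - b)).
  by apply: ler_sum => i _; apply: ler_sum => j _; rewrite !mxE.
have BA_le : L0^-1 * \sum_i \sum_j `|B i j - A i j| <= theta.
  by apply: dist_le => i j; exact: norm_mx_tilde_sub_le.
have AB_le : L0^-1 * \sum_i \sum_j `|A i j - B i j| <= theta.
  by apply: dist_le => i j; rewrite distrC norm_mx_tilde_sub_le.
have [r_gt0 r_le] := det_ratio_le m_gt0 L0_gt0 AT BT L0A L0B.
have [_ rV_le] := det_ratio_le m_gt0 L0_gt0 BT AT L0B L0A.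
apply: dist1_le_mul_expR r_gt0 _ (le_trans r_le _) _.
- apply: le_trans BA_le; rewrite mulr_ge0 ?invr_ge0 ?(ltW L0_gt0) //.
  by rewrite sumr_ge0 // => i _; rewrite sumr_ge0.
- by rewrite ler_expR.
- by rewrite invf_div (le_trans rV_le) // ler_expR.
Qed.
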